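(* For every query $Q$ of the query sublanguage $\mathcal{L}^{\mathrm{query}}$, the rewriting system $\mathcal{R}^{\mathrm{query}}_{\Sigma,\mathcal{D}}(Q)$ is terminating.
   Context: Setting: $\Sigma$ is a signature of facts containing sorts $\mathsf{Fact}$ and $\mathsf{Bool}$, and $\mathcal{D}$ is a $\Sigma$-algebra of facts (data types defined by directed equations and equational attributes; every ground Boolean term simplifies to true or false). A database is a finite multiset of facts, built with an associative-commutative operator $\circ$ with identity $\emptyset$. Patterns are multisets of (possibly non-ground) facts wrapped by modalities $[\_]_!$ (fact kept), $[\_]_?$ (fact considered at most once during a quantifier evaluation but not removed), $[\_]_0$ (fact deleted) and a modality for fresh facts; a pattern is terminating and preserving if it uses only $[\_]_!$ and $[\_]_?$ and contains at least one fact under $[\_]_?$. Conditions are built from $\mathsf{False}$, $\{B\}$ ($B$ Boolean term), negation, disjunction and $\exists P.\psi$ with $P$ a terminating and preserving pattern. Queries of $\mathcal{L}^{\mathrm{query}}$ are built from $\emptyset$, facts $f$, union $Q\oplus Q'$ (multiset union of results), conditionals $\phi\Rightarrow Q$ ($\phi$ a condition), and iteration $\mathrm{from}\ P.Q$ with $P$ a terminating and preserving pattern. The rewriting system $\mathcal{R}^{\mathrm{query}}_{\Sigma,\mathcal{D}}(Q)$ rewrites top-level state terms $\{F,F',S\}^q$, where $F$ is the database, $F'$ the partial answer and $S$ a stack of frames indexed by subqueries of $Q$ together with the current substitution; evaluation starts from $\mathrm{Init}_Q(F)=\{F,\emptyset,[\,]_Q\}^q$ and normal forms are $\mathrm{Ans}(F')$.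 Union frames are split into two frames for the arguments, a fact frame adds the instantiated fact to the partial answer, a conditional frame embeds the (terminating) stack evaluation of the condition and then either evaluates the body or is dropped, and $\mathrm{from}\ P.R$ is evaluated with an iterator frame holding an iterator state (initially the whole database): each unfolding step matches the $[\_]_!$ and $[\_]_?$ facts of $P$ against the iterator state, removes the matched $[\_]_?$ facts from it and pushes a frame for $R$ with the extended substitution; the iterator frame is removed when no match remains. *)

From Stdlib Require Import List Permutation.
Import ListNotations.

(* The data of the signature of facts Sigma and the algebra of facts D that the
   query semantics uses:
   - gfact : ground facts (canonical forms of ground Fact terms in D);
   - fterm : possibly non-ground Fact terms;
   - bterm : Boolean terms;
   - subst : substitutions;
   - inst s f : canonical form of the ground instance s(f);
   - evalb s B : value (true/false) of the ground Boolean term s(B)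
     (every ground Boolean term simplifies to true or false);
   - fmatch s f g s' : s' is a matching substitution (modulo the equations of D)
     extending s such that s'(f) = g. *)
Record FactAlgebra := {
  gfact : Type;
  fterm : Type;
  bterm : Type;
  subst : Type;
  inst : subst -> fterm -> gfact;
  evalb : subst -> bterm -> bool;
  fmatch : subst -> fterm -> gfact -> subst -> Prop;
  fmatch_sound : forall s f g s', fmatch s f g s' -> inst s' f = g
}.

Section QuerySystem.
Variable A : FactAlgebra.

(* databases / multisets of facts are represented by lists up to permutation *)
Definition db := list (gfact A).

(* modalities [_]_!, [_]_?, [_]_0 and the fresh-fact modality *)
Inductive modality := MKeep | MOnce | MDel | MFresh.

Definition pattern := list (modality * fterm A).

Definition term_pres (P : pattern) : Prop :=
  Forall (fun p => fst p = MKeep \/ fst p = MOnce) P /\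
  exists f, In (MOnce, f) P.

Inductive cond :=
| CFalse
| CBool (b : bterm A)
| CNot (c : cond)
| COr (c1 c2 : cond)
| CEx (P : pattern) (c : cond).

Inductive query :=
| QEmpty
| QFact (f : fterm A)
| QUnion (q1 q2 : query)
| QIf (c : cond) (q : query)
| QFrom (P : pattern) (q : query).

Fixpoint wf_cond (c : cond) : Prop :=
  match c with
  | CFalse | CBool _ => True
  | CNot c => wf_cond c
  | COr c1 c2 => wf_cond c1 /\ wf_cond c2
  | CEx P c => term_pres P /\ wf_cond c
  end.

(* Q belongs to L^query: conditions well formed, iteration patterns terminating
   and preserving *)
Fixpoint wf_query (q : query) : Prop :=
  match q with
  | QEmpty | QFact _ => True
  | QUnion q1 q2 => wf_query q1 /\ wf_query q2
  | QIf c q => wf_cond c /\ wf_query q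
  | QFrom P q => term_pres P /\ wf_query q
  end.

Inductive subq : query -> query -> Prop :=
| subq_refl q : subq q q
| subq_union_l q q1 q2 : subq q q1 -> subq q (QUnion q1 q2)
| subq_union_r q q1 q2 : subq q q2 -> subq q (QUnion q1 q2)
| subq_if q c q0 : subq q q0 -> subq q (QIf c q0)
| subq_from q P q0 : subq q q0 -> subq q (QFrom P q0).

Inductive subc : cond -> cond -> Prop :=
| subc_refl c : subc c c
| subc_not c c0 : subc c c0 -> subc c (CNot c0)
| subc_or_l c c1 c2 : subc c c1 -> subc c (COr c1 c2)
| subc_or_r c c1 c2 : subc c c2 -> subc c (COr c1 c2)
| subc_ex c P c0 : subc c c0 -> subc c (CEx P c0).

Definition cond_in (Q : query) (c : cond) : Prop :=
  exists c0 q, subq (QIf c0 q) Q /\ subc c c0.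

(* multiset matching of a list of fact terms against a multiset of facts:
   pmatch s fs I s' R : the fs match distinct occurrences in I, extending s to
   s', and R is I minus the matched occurrences *)
Inductive pmatch : subst A -> list (fterm A) -> db -> subst A -> db -> Prop :=
| pm_nil s I : pmatch s [] I s I
| pm_cons s f fs I g I' s1 s2 R :
    Permutation I (g :: I') -> fmatch A s f g s1 -> pmatch s1 fs I' s2 R ->
    pmatch s (f :: fs) I s2 R.

Definition facts_with (m : modality) (P : pattern) : list (fterm A) :=
  map snd (filter (fun p => match fst p, m with
                            | MKeep, MKeep | MOnce, MOnce
                            | MDel, MDel | MFresh, MFresh => true
                            | _, _ => false end) P).

Definition iter_match (P : pattern) (s : subst A) (I : db)
    (s' : subst A) (I' : db) : Prop :=
  exists s1 R, pmatch s (facts_with MOnce P) I s1 I' /\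
               pmatch s1 (facts_with MKeep P) I' s' R.

(* stack evaluation of conditions (the active position of the tree is the top
   of the stack) *)
Inductive ceval :=
| CE (c : cond) (s : subst A)
| CV (b : bool)
| CENot (e : ceval)
| CEOr (e : ceval) (c2 : cond) (s : subst A)
| CEExIter (P : pattern) (c : cond) (s : subst A) (I : db)
| CEExBody (P : pattern) (c : cond) (s : subst A) (I : db) (e : ceval).

Inductive cstep (F : db) : ceval -> ceval -> Prop :=
| cs_false s : cstep F (CE CFalse s) (CV false)
| cs_bool b s : cstep F (CE (CBool b) s) (CV (evalb A s b))
| cs_not c s : cstep F (CE (CNot c) s) (CENot (CE c s))
| cs_not_v b : cstep F (CENot (CV b)) (CV (negb b))
| cs_not_ctx e e' : cstep F e e' -> cstep F (CENot e) (CENot e')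
| cs_or c1 c2 s : cstep F (CE (COr c1 c2) s) (CEOr (CE c1 s) c2 s)
| cs_or_true c2 s : cstep F (CEOr (CV true) c2 s) (CV true)
| cs_or_false c2 s : cstep F (CEOr (CV false) c2 s) (CE c2 s)
| cs_or_ctx e e' c2 s : cstep F e e' -> cstep F (CEOr e c2 s) (CEOr e' c2 s)
| cs_ex P c s : cstep F (CE (CEx P c) s) (CEExIter P c s F)
| cs_ex_unfold P c s I s' I' :
    iter_match P s I s' I' ->
    cstep F (CEExIter P c s I) (CEExBody P c s I' (CE c s'))
| cs_ex_done P c s I :
    (forall s' I', ~ iter_match P s I s' I') ->
    cstep F (CEExIter P c s I) (CV false)
| cs_ex_true P c s I : cstep F (CEExBody P c s I (CV true)) (CV true)
| cs_ex_false P c s I :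
    cstep F (CEExBody P c s I (CV false)) (CEExIter P c s I)
| cs_ex_ctx P c s I e e' :
    cstep F e e' -> cstep F (CEExBody P c s I e) (CEExBody P c s I e').

Inductive frame :=
| FQ (q : query) (s : subst A)
| FCond (c : cond) (q : query) (s : subst A) (e : ceval)
| FIter (P : pattern) (q : query) (s : subst A) (I : db).

Inductive qstate :=
| QS (F : db) (Ans : db) (S : list frame)
| QAns (Ans : db).

Inductive qstep : qstate -> qstate -> Prop :=
| qs_empty F Ans s S : qstep (QS F Ans (FQ QEmpty s :: S)) (QS F Ans S)
| qs_fact F Ans f s S :
    qstep (QS F Ans (FQ (QFact f) s :: S)) (QS F (inst A s f :: Ans) S)
| qs_union F Ans q1 q2 s S :
    qstep (QS F Ans (FQ (QUnion q1 q2) s :: S))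
          (QS F Ans (FQ q1 s :: FQ q2 s :: S))
| qs_if F Ans c q s S :
    qstep (QS F Ans (FQ (QIf c q) s :: S)) (QS F Ans (FCond c q s (CE c s) :: S))
| qs_cond_step F Ans c q s e e' S :
    cstep F e e' ->
    qstep (QS F Ans (FCond c q s e :: S)) (QS F Ans (FCond c q s e' :: S))
| qs_cond_true F Ans c q s S :
    qstep (QS F Ans (FCond c q s (CV true) :: S)) (QS F Ans (FQ q s :: S))
| qs_cond_false F Ans c q s S :
    qstep (QS F Ans (FCond c q s (CV false) :: S)) (QS F Ans S)
| qs_from F Ans P q s S :
    qstep (QS F Ans (FQ (QFrom P q) s :: S)) (QS F Ans (FIter P q s F :: S))
| qs_iter F Ans P q s I s' I' S :
    iter_match P s I s' I' ->
    qstep (QS F Ans (FIter P q s I :: S))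
          (QS F Ans (FQ q s' :: FIter P q s I' :: S))
| qs_iter_done F Ans P q s I S :
    (forall s' I', ~ iter_match P s I s' I') ->
    qstep (QS F Ans (FIter P q s I :: S)) (QS F Ans S)
| qs_ans F Ans : qstep (QS F Ans []) (QAns Ans).

(* terms of the rewriting system R^query(Q): frames indexed by subqueries of Q *)
Fixpoint ce_in (Q : query) (e : ceval) : Prop :=
  match e with
  | CE c _ => cond_in Q c
  | CV _ => True
  | CENot e => ce_in Q e
  | CEOr e c2 _ => ce_in Q e /\ cond_in Q c2
  | CEExIter P c _ _ => cond_in Q (CEx P c)
  | CEExBody P c _ _ e => cond_in Q (CEx P c) /\ ce_in Q e
  end.

Definition frame_in (Q : query) (fr : frame) : Prop :=
  match fr with
  | FQ q _ => subq q Q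
  | FCond c q _ e => subq (QIf c q) Q /\ ce_in Q e
  | FIter P q _ _ => subq (QFrom P q) Q
  end.

Definition state_in (Q : query) (st : qstate) : Prop :=
  match st with
  | QS _ _ stk => Forall (frame_in Q) stk
  | QAns _ => True
  end.

Definition Init (Q : query) (F : db) (s0 : subst A) : qstate := QS F [] [FQ Q s0].

Definition terminating (Q : query) : Prop :=
  forall st, state_in Q st -> Acc (fun t u => qstep u t) st.

End QuerySystem.

Arguments CFalse {A}. Arguments QEmpty {A}.

(* Every rewrite step strictly decreases a natural-number weight of the
   state.  A terminating and preserving pattern contains a [_]_? fact, so each
   unfolding of an iterator removes at least one fact from its state; that
   state starts as the database F, which evaluation never changes, so an
   iterator is unfolded at most |F| times.  An iterator with state J is
   therefore weighted (|J| + 1) times (weight of its body + a constant), which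
   pays for all its future unfoldings, and an iteration not yet started is
   weighted as if J = F. *)

From Stdlib Require Import List Permutation Lia Wf_nat.

Lemma acc_of_decreasing_measure (X : Type) (R : X -> X -> Prop)
    (Inv : X -> Prop) (measure : X -> nat) :
  (forall x y, Inv x -> R x y -> Inv y /\ measure y < measure x) ->
  forall x, Inv x -> Acc (fun y x => R x y) x.
Proof.
  intros Hdec x.
  induction x as [x IH] using (well_founded_induction (well_founded_ltof X measure)).
  intros Hx. constructor. intros y Hxy.
  destruct (Hdec x y Hx Hxy) as [Hy Hlt].
  exact (IH y Hlt Hy).
Qed.

Section Termination.
Variable A : FactAlgebra.

Lemma pmatch_length s fs I s' R :
  pmatch A s fs I s' R -> length I = length fs + length R.
Proof.
  induction 1 as [|s f fs I g I' s1 s2 R Hperm _ _ IH]; [reflexivity|].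
  rewrite (Permutation_length Hperm). simpl. lia.
Qed.

Lemma iter_match_length_lt P s I s' I' :
  term_pres A P -> iter_match A P s I s' I' -> length I' < length I.
Proof.
  intros [_ [f Hf]] [s1 [R [Honce _]]].
  apply pmatch_length in Honce.
  assert (Hin : In f (facts_with A MOnce P)).
  { apply in_map_iff. exists (MOnce, f). split; [reflexivity|].
    apply filter_In. split; [exact Hf | reflexivity]. }
  destruct (facts_with A MOnce P); [contradiction|].
  simpl in Honce. lia.
Qed.

Fixpoint ceval_wf (e : ceval A) : Prop :=
  match e with
  | CE _ c _ => wf_cond A c
  | CV _ _ => True
  | CENot _ e => ceval_wf e
  | CEOr _ e c2 _ => ceval_wf e /\ wf_cond A c2
  | CEExIter _ P c _ _ => term_pres A P /\ wf_cond A c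
  | CEExBody _ P c _ _ e => term_pres A P /\ wf_cond A c /\ ceval_wf e
  end.

Definition frame_wf (fr : frame A) : Prop :=
  match fr with
  | FQ _ q _ => wf_query A q
  | FCond _ _ q _ e => ceval_wf e /\ wf_query A q
  | FIter _ P q _ _ => term_pres A P /\ wf_query A q
  end.

Definition state_wf (st : qstate A) : Prop :=
  match st with
  | QS _ _ _ stk => Forall frame_wf stk
  | QAns _ _ => True
  end.

Section Weights.
Variable F : db A.

Fixpoint cond_weight (c : cond A) : nat :=
  match c with
  | CFalse => 1
  | CBool _ _ => 1
  | CNot _ c => cond_weight c + 2
  | COr _ c1 c2 => cond_weight c1 + cond_weight c2 + 2
  | CEx _ _ c => (length F + 1) * (cond_weight c + 3) + 1
  end.

Fixpoint ceval_weight (e : ceval A) : nat :=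
  match e with
  | CE _ c _ => cond_weight c
  | CV _ _ => 0
  | CENot _ e => ceval_weight e + 1
  | CEOr _ e c2 _ => ceval_weight e + cond_weight c2 + 1
  | CEExIter _ _ c _ J => (length J + 1) * (cond_weight c + 3)
  | CEExBody _ _ c _ J e => (length J + 1) * (cond_weight c + 3) + ceval_weight e + 1
  end.

Fixpoint query_weight (q : query A) : nat :=
  match q with
  | QEmpty => 1
  | QFact _ _ => 1
  | QUnion _ q1 q2 => query_weight q1 + query_weight q2 + 1
  | QIf _ c q => cond_weight c + query_weight q + 2
  | QFrom _ _ q => (length F + 1) * (query_weight q + 1) + 1
  end.

Definition frame_weight (fr : frame A) : nat :=
  match fr with
  | FQ _ q _ => query_weight q
  | FCond _ _ q _ e => ceval_weight e + query_weight q + 1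
  | FIter _ _ q _ J => (length J + 1) * (query_weight q + 1)
  end.

Lemma cstep_preserves_wf e e' : cstep A F e e' -> ceval_wf e -> ceval_wf e'.
Proof. induction 1; simpl; tauto. Qed.

Lemma cstep_weight_lt e e' :
  cstep A F e e' -> ceval_wf e -> ceval_weight e' < ceval_weight e.
Proof.
  induction 1; simpl; intros Hwf; try lia.
  - specialize (IHcstep Hwf). lia.
  - specialize (IHcstep (proj1 Hwf)). lia.
  - pose proof (iter_match_length_lt _ _ _ _ _ (proj1 Hwf) H). nia.
  - specialize (IHcstep (proj2 (proj2 Hwf))). lia.
Qed.

End Weights.

Definition state_weight (st : qstate A) : nat :=
  match st with
  | QS _ F _ stk => list_sum (map (frame_weight F) stk) + 1
  | QAns _ _ => 0
  end.

Lemma qstep_preserves_wf st st' : qstep A st st' -> state_wf st -> state_wf st'.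
Proof.
  destruct 1; simpl; intros Hwf; [..| trivial];
    inversion_clear Hwf as [|fr stk Hfr Hstk]; simpl in Hfr;
    repeat (apply Forall_cons; [simpl; try tauto |]); try assumption.
  split; [exact (cstep_preserves_wf _ _ _ H (proj1 Hfr)) | tauto].
Qed.

Lemma qstep_weight_lt st st' :
  qstep A st st' -> state_wf st -> state_weight st' < state_weight st.
Proof.
  destruct 1; simpl; intros Hwf; [..| lia];
    inversion_clear Hwf as [|fr stk Hfr Hstk]; simpl in Hfr; try lia.
  - pose proof (cstep_weight_lt _ _ _ H (proj1 Hfr)). lia.
  - pose proof (iter_match_length_lt _ _ _ _ _ (proj1 Hfr) H). nia.
Qed.

Lemma acc_of_state_wf st : state_wf st -> Acc (fun t u => qstep A u t) st.
Proof.
  apply (acc_of_decreasing_measure _ _ state_wf state_weight).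
  intros st0 st1 Hwf Hstep.
  split; [exact (qstep_preserves_wf _ _ Hstep Hwf) | exact (qstep_weight_lt _ _ Hstep Hwf)].
Qed.

Section InQuery.
Variable Q : query A.
Hypothesis HQ : wf_query A Q.

Lemma subq_wf q : subq A q Q -> wf_query A q.
Proof.
  intros Hsub. revert HQ. induction Hsub; simpl; tauto.
Qed.

Lemma cond_in_wf c : cond_in A Q c -> wf_cond A c.
Proof.
  intros [c0 [q [Hq Hc]]].
  apply subq_wf in Hq. simpl in Hq.
  destruct Hq as [Hc0 _]. revert Hc0.
  induction Hc; simpl; tauto.
Qed.

Lemma ce_in_wf e : ce_in A Q e -> ceval_wf e.
Proof.
  induction e; simpl; intros Hin; try tauto.
  - exact (cond_in_wf _ Hin).
  - split; [tauto | exact (cond_in_wf _ (proj2 Hin))].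
  - exact (cond_in_wf _ Hin).
  - destruct Hin as [Hex He]. apply cond_in_wf in Hex. simpl in Hex. tauto.
Qed.

Lemma state_in_wf st : state_in A Q st -> state_wf st.
Proof.
  destruct st as [F Ans stk | Ans]; simpl; [|trivial].
  intros Hstk. eapply Forall_impl; [|exact Hstk].
  intros [q s | c q s e | P q s I]; simpl.
  - exact (subq_wf q).
  - intros [Hq He]. apply subq_wf in Hq. simpl in Hq. split; [exact (ce_in_wf e He) | tauto].
  - intros Hq. exact (subq_wf _ Hq).
Qed.

End InQuery.
End Termination.

Theorem theorem3 (A : FactAlgebra) (Q : query A) :
  wf_query A Q -> terminating A Q.
Proof.
  intros HQ st Hst.
  exact (acc_of_state_wf A st (state_in_wf A Q HQ st Hst)).
Qed.
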